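(* Suppose the embedding errors are bounded as $\sup_{s,g\in\mathcal{S}}\bigl|d^*(s,g)-\|\phi(s)-\phi(g)\|\bigr|\le\epsilon_e$, the directional movement errors are bounded as $\sup_{s,g\in\mathcal{S}}\|z'^*(s,g)-\hat z'(s,g)\|\le\epsilon_d$, and $4\epsilon_e+\epsilon_d<1$. Then $\hat\pi$ is an optimal goal-reaching policy, i.e. for every $s,g\in\mathcal{S}$ with $s\neq g$, $d^*(p(s,\hat\pi(s,g)),g)=d^*(s,g)-1$.
   Context: Consider a deterministic Markov decision process with state space $\mathcal{S}$, action space $\mathcal{A}$ and deterministic transition function $p:\mathcal{S}\times\mathcal{A}\to\mathcal{S}$. Let $d^*:\mathcal{S}\times\mathcal{S}\to\mathbb{R}$ be the optimal temporal distance: $d^*(s,g)$ is the minimum number of time steps needed to reach $g$ from $s$, so it is a nonnegative integer and $d^*(s,s)=0$. Let $\phi:\mathcal{S}\to\mathcal{Z}$ be a map into a real Hilbert space with inner product $\langle\cdot,\cdot\rangle$ and induced norm $\|\cdot\|$. Let $N(s):=\{p(s,a):a\in\mathcal{A}\}$. For a state $s$ and a goal $g$ define $$z'^*(s,g):=\phi(s)+\frac{\phi(g)-\phi(s)}{\|\phi(g)-\phi(s)\|},$$ $$\hat\pi(s,g):=\arg\max_{a\in\mathcal{A}}\Bigl\langle\phi(s')-\phi(s),\frac{\phi(g)-\phi(s)}{\|\phi(g)-\phi(s)\|}\Bigr\rangle\ \text{ subject to } s'=p(s,a),\ \|\phi(s)-\phi(s')\|\le1,$$ $$\hat z'(s,g):=\phi\bigl(p(s,\hat\pi(s,g))\bigr).$$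 A goal-conditioned policy is optimal if, at every state-goal pair $(s,g)$ with $s\neq g$, the action it chooses decreases the temporal distance to $g$ by exactly one. *)

From HB Require Import structures.
From mathcomp Require Import all_boot all_order all_algebra.
From mathcomp Require Import all_classical all_reals all_analysis.
Set Implicit Arguments. Unset Strict Implicit. Unset Printing Implicit Defensive.
Import Order.TTheory GRing.Theory Num.Theory.
Import numFieldNormedType.Exports.
Local Open Scope ring_scope.

Definition is_inner_product (R : realType) (Z : completeNormedModType R)
  (ip : Z -> Z -> R) : Prop :=
  [/\ (forall x y, ip x y = ip y x),
      (forall (a : R) x y z, ip (a *: x + y) z = a * ip x z + ip y z)
    & (forall x, ip x x = `|x| ^+ 2)].

Fixpoint reach (S A : Type) (p : S -> A -> S) (n : nat) (s g : S) : Prop :=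
  match n with
  | 0 => s = g
  | n'.+1 => exists a : A, reach p n' (p s a) g
  end.

Definition is_optimal_temporal_distance (S A : Type) (p : S -> A -> S)
  (d : S -> S -> nat) : Prop :=
  forall s g, reach p (d s g) s g /\ (forall n, reach p n s g -> (d s g <= n)%N).

Definition zstar (R : realType) (Z : completeNormedModType R) (S : Type)
  (phi : S -> Z) (s g : S) : Z :=
  phi s + `|phi g - phi s|^-1 *: (phi g - phi s).

Definition dir_progress (R : realType) (Z : completeNormedModType R) (S : Type)
  (ip : Z -> Z -> R) (phi : S -> Z) (s g s' : S) : R :=
  ip (phi s' - phi s) (`|phi g - phi s|^-1 *: (phi g - phi s)).

Definition is_hat_pi (R : realType) (Z : completeNormedModType R) (S A : Type)
  (p : S -> A -> S) (ip : Z -> Z -> R) (phi : S -> Z) (pi : S -> S -> A)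
  (s g : S) : Prop :=
  `|phi s - phi (p s (pi s g))| <= 1 /\
  forall a : A, `|phi s - phi (p s a)| <= 1 ->
    dir_progress ip phi s g (p s a) <= dir_progress ip phi s g (p s (pi s g)).

From HB Require Import structures.
From mathcomp Require Import all_boot all_order all_algebra.
From mathcomp Require Import all_classical all_reals all_analysis.
From mathcomp Require Import lra zify.
Set Implicit Arguments. Unset Strict Implicit. Unset Printing Implicit Defensive.
Import Order.TTheory GRing.Theory Num.Theory.
Import numFieldNormedType.Exports.
Local Open Scope ring_scope.

(* With L := |phi g - phi s|, the ideal waypoint z'*(s,g) lies on the segment
   from phi s to phi g at distance |L - 1| from phi g, and L is within eps_e of
   d*(s,g) >= 1.  The chosen successor is eps_d-close to z'*(s,g), so its
   embedding distance to phi g is at most d*(s,g) - 1 + eps_e + eps_d, and its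
   temporal distance at most d*(s,g) - 1 + 2 eps_e + eps_d < d*(s,g).  A single
   step lowers d* by at most one, so it lowers it by exactly one. *)

Section OptimalTemporalDistance.

Variables (S A : Type) (p : S -> A -> S) (d : S -> S -> nat).
Hypothesis d_opt : is_optimal_temporal_distance p d.

Lemma dstar_le_succ_step s a g : (d s g <= (d (p s a) g).+1)%N.
Proof. by apply: (proj2 (d_opt s g)); exists a; exact: (proj1 (d_opt _ g)). Qed.

Lemma dstar_gt0 s g : s <> g -> (0 < d s g)%N.
Proof.
move=> neq_sg; case E: (d s g) => [|//].
by have := proj1 (d_opt s g); rewrite E.
Qed.

Lemma dstar_step_pred s a g :
  (d (p s a) g < d s g)%N -> d (p s a) g = (d s g - 1)%N.
Proof. by have := dstar_le_succ_step s a g; lia. Qed.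

End OptimalTemporalDistance.

Lemma normr_normalize_subr (R : realType) (V : normedModType R) (v : V) :
  v != 0 -> `| `|v|^-1 *: v - v| = `| `|v| - 1|.
Proof.
move=> v_neq0; have v_gt0 : 0 < `|v| by rewrite normr_gt0.
rewrite -[X in _ - X]scale1r -scalerBl normrZ -{2}(gtr0_norm v_gt0) -normrM.
by rewrite mulrBl mulVf ?gt_eqF // mul1r distrC.
Qed.

Lemma norm_zstar_subr (R : realType) (Z : completeNormedModType R) (S : Type)
    (phi : S -> Z) s g :
  phi g != phi s -> `|zstar phi s g - phi g| = `| `|phi g - phi s| - 1|.
Proof.
rewrite -subr_eq0 => /normr_normalize_subr <-; congr `|_|.
by rewrite /zstar opprB addrA [phi s + _]addrC.
Qed.

Section EmbeddingError.

Variables (R : realType) (Z : completeNormedModType R) (S : Type).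
Variables (phi : S -> Z) (d : S -> S -> nat) (eps_e : R).
Hypothesis embed_err : forall s g, `|(d s g)%:R - `|phi s - phi g| | <= eps_e.

Lemma embed_err_ge0 : S -> 0 <= eps_e.
Proof. by move=> s; apply: le_trans (embed_err s s). Qed.

Lemma dstar_lt_near_zstar s g s' eps_d :
  `|zstar phi s g - phi s'| <= eps_d ->
  (0 < d s g)%N -> 2 * eps_e + eps_d < 1 -> (d s' g < d s g)%N.
Proof.
move=> near_z d_gt0 small_err.
have D_ge1 : 1 <= (d s g)%:R :> R by rewrite ler1n.
have eps_e_ge0 := embed_err_ge0 s.
have eps_d_ge0 := le_trans (normr_ge0 _) near_z.
have /ler_normlP [L_ge L_le] := embed_err s g; rewrite (distrC (phi s)) in L_ge L_le.
have phi_neq : phi g != phi s.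
  by rewrite -subr_eq0 -normr_gt0; lra.
have L1_le : `| `|phi g - phi s| - 1| <= (d s g)%:R - 1 + eps_e.
  by apply/ler_normlP; split; lra.
have next_le : `|phi s' - phi g| <= `| `|phi g - phi s| - 1| + eps_d.
  rewrite -norm_zstar_subr // [leRHS]addrC.
  by apply: le_trans (ler_distD (zstar phi s g) _ _) _; rewrite lerD2r distrC.
have /ler_normlP [_ next_emb] := embed_err s' g.
by rewrite -(ltr_nat R); lra.
Qed.

End EmbeddingError.

Theorem corollaryC3 (R : realType) (Z : completeNormedModType R)
  (ip : Z -> Z -> R) (S A : Type) (p : S -> A -> S) (dstar : S -> S -> nat)
  (phi : S -> Z) (pi : S -> S -> A) (eps_e eps_d : R) :
  is_inner_product ip ->
  is_optimal_temporal_distance p dstar ->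
  (forall s g, s <> g -> is_hat_pi p ip phi pi s g) ->
  (forall s g, `| (dstar s g)%:R - `|phi s - phi g| | <= eps_e) ->
  (forall s g, s <> g -> `|zstar phi s g - phi (p s (pi s g))| <= eps_d) ->
  4 * eps_e + eps_d < 1 ->
  forall s g, s <> g ->
    dstar (p s (pi s g)) g = (dstar s g - 1)%N.
Proof.
move=> _ d_opt _ embed_err dir_err small_err s g neq_sg.
apply: (dstar_step_pred d_opt).
have eps_e_ge0 := embed_err_ge0 embed_err s.
apply: (dstar_lt_near_zstar embed_err (dir_err s g neq_sg)).
- exact: (dstar_gt0 d_opt neq_sg).
- lra.
Qed.
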